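(* Let $\lambda\ge\omega$ and $\mu$ be cardinals and $n\ge2$, $k\ge1$ natural numbers such that the partition relation $\lambda\to(n)^{n-1}_{\mu^k}$ holds. Then $\chi_{\rm CF}(\lambda,t,k+1)>\mu$ for every natural number $t$ with $k<t\le n\cdot k$ if $n>2$, and for every even natural number $t$ with $k<t\le 2k$ if $n=2$.
   Context: $\lambda\to(n)^{r}_{\theta}$ means: for every coloring of the $r$-element subsets of $\lambda$ with $\theta$ colors there is an $n$-element subset of $\lambda$ all of whose $r$-element subsets get the same color. For a family $\mathcal A$ and cardinal $\rho$, $f:\bigcup\mathcal A\to\rho$ is a conflict free coloring of $\mathcal A$ if for every $A\in\mathcal A$ some $\zeta<\rho$ has $|A\cap f^{-1}\{\zeta\}|=1$; $\chi_{\rm CF}(\mathcal A)$ is the least such $\rho$. A $(\lambda,\kappa,\mu)$-system is a family of $\lambda$ sets each of size $\kappa$, distinct members meeting in fewer than $\mu$ points; $\chi_{\rm CF}(\lambda,\kappa,\mu)$ is the supremum of $\chi_{\rm CF}(\mathcal A)$ over all $(\lambda,\kappa,\mu)$-systems. *)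

(* Cardinals are represented by types:
   the cardinal lambda by a (choice) type L, mu by a type M. *)
From mathcomp Require Import all_boot.
From mathcomp Require Export finmap.
Set Implicit Arguments. Unset Strict Implicit. Unset Printing Implicit Defensive.
Open Scope fset_scope.

Definition infinite_type (L : choiceType) : Prop :=
  ~ exists s : seq L, forall x : L, x \in s.

Definition partition_rel (L : choiceType) (C : Type) (n r : nat) : Prop :=
  forall c : {fset L} -> C,
    exists H : {fset L}, #|` H| = n /\
      exists col : C, forall S : {fset L}, S `<=` H -> #|` S| = r -> c S = col.

(* A (lambda, kappa, mu)-system (kappa, mu finite here): a family of |L| sets
   (indexed injectively by L, so the members are distinct), each of size
   kappa, distinct members meeting in fewer than mu points. *)
Definition is_system (L : Type) (X : choiceType) (A : L -> {fset X})
    (kappa mu : nat) : Prop :=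
  injective A /\ (forall i, #|` A i| = kappa) /\
  (forall i j, i <> j -> #|` A i `&` A j| < mu).

Definition conflict_free (L X M : Type) (A : L -> X -> Prop) (f : X -> M) : Prop :=
  forall i, exists zeta : M, exists x, A i x /\ f x = zeta /\
     forall y, A i y -> f y = zeta -> y = x.

Definition chiCF_gt (L : Type) (X : choiceType) (A : L -> {fset X}) (M : Type) : Prop :=
  ~ exists f : X -> M, conflict_free (fun i x => x \in A i) f.

(* chi_CF(|L|, kappa, mu) > |M| : the supremum over all (|L|,kappa,mu)-systems
   exceeds |M|, i.e. some such system has chi_CF > |M|. *)
Definition chiCF_sys_gt (L : Type) (kappa mu : nat) (M : Type) : Prop :=
  exists (X : choiceType) (A : L -> {fset X}), is_system A kappa mu /\ chiCF_gt A M.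

(* For every n-element set H of L the family contains a block of t points
   (s, m), with s an (n-1)-subset of H and m < k, chosen so that each index m
   that occurs occurs at least twice; this is where t <= n k, t <> 1 and, for
   n = 2, the parity of t are used.  Distinct n-sets share at most one
   (n-1)-subset, so distinct blocks meet in at most k points.  Given a colouring
   f with colours in M, colour each (n-1)-set s by m |-> f (s, m) and take an
   n-set H homogeneous for this colouring: on the block of H, f (s, m) depends
   on m only, so every colour class meeting the block meets it at least twice.
   Indexing the blocks by L needs |[L]^<omega| = |L|, which follows from
   |L x L| = |L| (Zorn). *)

From mathcomp Require Import all_boot finmap.
From mathcomp Require Import zify boolp classical_sets cardinality functions.
Set Implicit Arguments. Unset Strict Implicit. Unset Printing Implicit Defensive.

Section Cardinals.
Local Close Scope fset_scope.
Local Open Scope classical_set_scope.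

Lemma nat_inj_of_infinite (L : choiceType) :
  infinite_type L -> exists nu : nat -> L, injective nu.
Proof.
move=> Linf; have /infiniteP/card_leP[f] : infinite_set [set: L].
  move=> /finite_seqP[s sE]; apply: Linf; exists s => x.
  by have : [set: L] x by []; rewrite sE.
exists (fun i => val (f (SigSub (mem_set (I : [set: nat] i))))).
by move=> i j /val_inj/(inj (mem_set I) (mem_set I)) [].
Qed.

Lemma set_inj_of_relation (T : Type) (A B : set T) (R : T -> T -> Prop) :
  (forall a, A a -> exists2 b, B b & R a b) ->
  (forall a a' b, R a b -> R a' b -> a = a') ->
  exists2 f : T -> T, set_fun A B f & set_inj A f.
Proof.
move=> Rtot Rinj; have /choice[f Rf] : forall a, exists b, A a -> B b /\ R a b.
  move=> a; have [/Rtot[b Bb Rab]|nAa] := pselect (A a); first by exists b.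
  by exists a.
exists f => [a /Rf[]//|a a' /set_mem/Rf[_ Raf] /set_mem/Rf[_ Ra'f'] faE].
by apply: Rinj Raf _; rewrite faE.
Qed.

Section InjectionTotal.
Variables (T : Type) (A B : set T).

Definition partial_matching (R : set (T * T)) :=
  [/\ forall a b, R (a, b) -> A a /\ B b,
      forall a b b', R (a, b) -> R (a, b') -> b = b' &
      forall a a' b, R (a, b) -> R (a', b) -> a = a'].

Lemma partial_matching_bigcup F : F `<=` partial_matching -> total_on F subset ->
  partial_matching (\bigcup_(R in F) R).
Proof.
move=> Fmatch Ftot.
have common R R' p p' : F R -> F R' -> R p -> R' p' ->
    exists2 R'', F R'' & R'' p /\ R'' p'.
  move=> FR FR' Rp R'p'; have [RR'|R'R] := Ftot R R' FR FR'.
    by exists R' => //; split => //; apply: RR'.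
  by exists R => //; split => //; apply: R'R.
split.
- by move=> a b [R FR Rab]; case: (Fmatch R FR) => dom _ _; apply: dom Rab.
- move=> a b b' [R FR Rab] [R' FR' Rab'].
  have [R'' FR'' [R''ab R''ab']] := common _ _ _ _ FR FR' Rab Rab'.
  by case: (Fmatch R'' FR'') => _ fun_R'' _; apply: fun_R'' R''ab R''ab'.
- move=> a a' b [R FR Rab] [R' FR' Ra'b].
  have [R'' FR'' [R''ab R''a'b]] := common _ _ _ _ FR FR' Rab Ra'b.
  by case: (Fmatch R'' FR'') => _ _ inj_R''; apply: inj_R'' R''ab R''a'b.
Qed.

Lemma set_inj_total :
  (exists2 f : T -> T, set_fun A B f & set_inj A f) \/
  (exists2 f : T -> T, set_fun B A f & set_inj B f).
Proof.
have [R [[Rdom Rfun Rinj] Rmax]] := Zorn_bigcup partial_matching_bigcup.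
have [Atot|/existsNP[a /not_implyP[Aa aR]]] :=
  pselect (forall x, A x -> exists2 y, B y & R (x, y)).
  by left; apply: set_inj_of_relation Atot Rinj.
have [Btot|/existsNP[b /not_implyP[Bb Rb]]] :=
  pselect (forall y, B y -> exists2 x, A x & R (x, y)).
  by right; apply: set_inj_of_relation Btot _ => y y' x Rxy Rxy'; apply: Rfun Rxy Rxy'.
exfalso; apply: (Rmax (R `|` [set (a, b)])).
  split; first exact: subsetUl.
  by move/(_ (a, b) (or_intror erefl)) => Rab; apply: aR; exists b.
split.
- by move=> x y [/Rdom//|/pair_equal_spec[-> ->]].
- move=> x y y' [Rxy|/pair_equal_spec[-> ->]] [Rxy'|/pair_equal_spec[xE ->]] //.
  + exact: Rfun Rxy Rxy'.
  + by case: aR; exists y => //; [case: (Rdom _ _ Rxy)|rewrite -xE].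
  + by case: aR; exists y'; [case: (Rdom _ _ Rxy')|].
- move=> x x' y [Rxy|/pair_equal_spec[-> ->]] [Rx'y|/pair_equal_spec[-> yE]] //.
  + exact: Rinj Rxy Rx'y.
  + by case: Rb; exists x => //; [case: (Rdom _ _ Rxy)|rewrite -yE].
  + by case: Rb; exists x'; [case: (Rdom _ _ Rx'y)|].
Qed.
End InjectionTotal.

Definition pairing_on (T : Type) (A : set T) (g : T -> T -> T) :=
  (forall x y, A x -> A y -> A (g x y)) /\
  (forall x y x' y', A x -> A y -> A x' -> A y' -> g x y = g x' y' -> x = x' /\ y = y').

Section Pairing.
Variables (L : Type) (nu : nat -> L).
Hypothesis nu_inj : injective nu.

Local Notation point := (L + (L * L) * L)%type.

Definition carrier (S : set point) : set L := fun x => S (inl x).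
Definition graph (S : set point) x y z := S (inr ((x, y), z)).

(* Zorn's lemma is applied to sets, so an injection g : A x A -> A is encoded by
   the points inl x (x in A) and inr ((x, y), g x y); the disjunct S = set0 gives
   the empty chain an upper bound. *)
Definition partial_pairing (S : set point) :=
  [/\ forall x y z z', graph S x y z -> graph S x y z' -> z = z',
      forall x y x' y' z, graph S x y z -> graph S x' y' z -> x = x' /\ y = y',
      forall x y z, graph S x y z -> [/\ carrier S x, carrier S y & carrier S z],
      forall x y, carrier S x -> carrier S y -> exists z, graph S x y z &
      S = set0 \/ forall i, carrier S (nu i)].

Definition pairing_set (A : set L) (g : L -> L -> L) : set point := fun e =>
  match e with inl x => A x | inr (x, y, z) => [/\ A x, A y & z = g x y] end.

Lemma partial_pairing_set A g :
  pairing_on A g -> (forall i, A (nu i)) -> partial_pairing (pairing_set A g).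
Proof.
move=> [gA gI] nuA; split => //; last by right.
- by move=> x y z z' [_ _ ->] [_ _ ->].
- by move=> x y x' y' z [Ax Ay ->] [Ax' Ay']; apply: gI.
- by move=> x y z [Ax Ay ->]; split => //; apply: gA.
- by move=> x y Ax Ay; exists (g x y).
Qed.

Lemma partial_pairing_graph S : partial_pairing S ->
  exists2 g, pairing_on (carrier S) g & S `<=` pairing_set (carrier S) g.
Proof.
move=> [Sfun Sinj Sdom Stot _].
have /choice[g gS] : forall p : L * L, exists z,
    carrier S p.1 -> carrier S p.2 -> graph S p.1 p.2 z.
  move=> [x y]; have [[Sx Sy]|nS] := pselect (carrier S x /\ carrier S y).
    by have [z Sz] := Stot x y Sx Sy; exists z.
  by exists x => Sx Sy; case: nS.
exists (fun x y => g (x, y)); first split.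
- by move=> x y Sx Sy; case: (Sdom _ _ _ (gS (x, y) Sx Sy)).
- move=> x y x' y' Sx Sy Sx' Sy' gE; apply: (Sinj _ _ _ _ _ (gS (x, y) Sx Sy)).
  by rewrite gE; apply: (gS (x', y')).
- case=> [x|[[x y] z]] //= Sz; have [Sx Sy _] := Sdom _ _ _ Sz.
  by split => //; apply: Sfun Sz (gS (x, y) Sx Sy).
Qed.

Lemma partial_pairing_bigcup F : F `<=` partial_pairing -> total_on F subset ->
  partial_pairing (\bigcup_(S in F) S).
Proof.
move=> Fpair Ftot.
have common S S' e e' : F S -> F S' -> S e -> S' e' ->
    exists2 S'', F S'' & S'' e /\ S'' e'.
  move=> FS FS' Se S'e'; have [SS'|S'S] := Ftot S S' FS FS'.
    by exists S' => //; split => //; apply: SS'.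
  by exists S => //; split => //; apply: S'S.
split.
- move=> x y z z' [S FS Sz] [S' FS' S'z'].
  have [S'' FS'' [S''z S''z']] := common _ _ _ _ FS FS' Sz S'z'.
  by case: (Fpair S'' FS'') => Sfun _ _ _ _; apply: Sfun S''z S''z'.
- move=> x y x' y' z [S FS Sz] [S' FS' S'z].
  have [S'' FS'' [S''z S''z']] := common _ _ _ _ FS FS' Sz S'z.
  by case: (Fpair S'' FS'') => _ Sinj _ _ _; apply: Sinj S''z S''z'.
- move=> x y z [S FS Sz]; case: (Fpair S FS) => _ _ Sdom _ _.
  by case: (Sdom _ _ _ Sz) => Sx Sy Sz'; split; exists S.
- move=> x y [S FS Sx] [S' FS' S'y].
  have [S'' FS'' [S''x S''y]] := common _ _ _ _ FS FS' Sx S'y.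
  case: (Fpair S'' FS'') => _ _ _ Stot _.
  by have [z S''z] := Stot x y S''x S''y; exists z, S''.
- have [->|/set0P[e [S FS Se]]] := eqVneq (\bigcup_(S in F) S) set0; first by left.
  right; case: (Fpair S FS) => _ _ _ _ [S0|nuS]; last by move=> i; exists S => //; apply: nuS.
  by move: Se; rewrite S0.
Qed.

Lemma pairing_on_nat : exists g, pairing_on (range nu) g.
Proof.
have /choice[idx idxP] : forall x, exists i, forall j, nu j = x -> j = i.
  move=> x; have [[i _ <-]|nx] := pselect (range nu x).
    by exists i => j /nu_inj.
  by exists 0 => j jx; case: nx; exists j.
have idxK j : idx (nu j) = j by rewrite -(idxP (nu j) j).
exists (fun x y => nu (choice.pickle (idx x, idx y))); split.
  by move=> x y _ _; exists (choice.pickle (idx x, idx y)).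
move=> _ _ _ _ [i _ <-] [j _ <-] [i' _ <-] [j' _ <-] /nu_inj/(pcan_inj choice.pickleK).
by rewrite !idxK => -[-> ->].
Qed.

Lemma pairing_on_extend A g h : pairing_on A g -> (forall i, A (nu i)) ->
    set_fun A (~` A) h -> set_inj A h ->
  exists2 g', pairing_on (A `|` h @` A) g' & forall x y, A x -> A y -> g' x y = g x y.
Proof.
move=> [gA gI] nuA hA hI.
have /choice[hinv hinvP] : forall x, exists a, (h @` A) x -> A a /\ h a = x.
  move=> x; have [[a Aa <-]|nx] := pselect ((h @` A) x); first by exists a.
  by exists x.
pose side x := if pselect (A x) then 0 else 1.
pose base x := if pselect (A x) then x else hinv x.
have side_le1 x : side x <= 1 by rewrite /side; case: pselect.
have base_in x : (A `|` h @` A) x -> A (base x).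
  by rewrite /base; case: pselect => // Ax [//|/hinvP[]].
have base_inj x x' : (A `|` h @` A) x -> (A `|` h @` A) x' ->
    side x = side x' -> base x = base x' -> x = x'.
  move=> Bx Bx'; rewrite /side /base.
  case: pselect => Ax; case: pselect => Ax' //= _ hinvE.
  case: Bx Bx' => [//|/hinvP[_ hx]] [//|/hinvP[_ hx']].
  by rewrite -hx -hx' hinvE.
(* The three new blocks h A x A, A x h A and h A x h A are sent into h A, kept
   apart by the tag nu (side x + 2 * side y). *)
pose g' x y := if pselect (A x /\ A y) then g x y
               else h (g (nu (side x + 2 * side y)) (g (base x) (base y))).
have gB x y : (A `|` h @` A) x -> (A `|` h @` A) y -> A (g (base x) (base y)).
  by move=> Bx By; apply: gA; apply: base_in.
have gN x y : (A `|` h @` A) x -> (A `|` h @` A) y ->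
    A (g (nu (side x + 2 * side y)) (g (base x) (base y))).
  by move=> Bx By; apply: gA; [apply: nuA|apply: gB].
exists g'; first split.
- move=> x y Bx By; rewrite /g'; case: pselect => [[Ax Ay]|nAxy].
    by left; apply: gA.
  by right; exists (g (nu (side x + 2 * side y)) (g (base x) (base y))); first exact: gN.
- move=> x y x' y' Bx By Bx' By'; rewrite /g'.
  case: pselect => [[Ax Ay]|nAxy]; case: pselect => [[Ax' Ay']|nAxy'] /=.
  + exact: gI.
  + by move=> gE; case: (hA _ (gN _ _ Bx' By')); rewrite -gE; apply: gA.
  + by move=> gE; case: (hA _ (gN _ _ Bx By)); rewrite gE; apply: gA.
  + move/(hI _ _ (mem_set (gN _ _ Bx By)) (mem_set (gN _ _ Bx' By'))).
    case/(gI _ _ _ _ (nuA _) (gB _ _ Bx By) (nuA _) (gB _ _ Bx' By')) => /nu_inj sideE.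
    case/(gI _ _ _ _ (base_in _ Bx) (base_in _ By) (base_in _ Bx') (base_in _ By')).
    have := (side_le1 x, side_le1 y, side_le1 x', side_le1 y') => -[[[? ?] ?] ?].
    by move=> bxE byE; split; apply: base_inj => //; lia.
- by move=> x y Ax Ay; rewrite /g'; case: pselect => // -[].
Qed.

Lemma pairing_of_cover A g h : pairing_on A g -> (forall i, A (nu i)) ->
    set_fun (~` A) A h -> set_inj (~` A) h ->
  exists pr : L -> L -> L, pairing_on setT pr.
Proof.
move=> [gA gI] nuA hA hI.
pose phi x := if pselect (A x) then g (nu 0) x else g (nu 1) (h x).
have phiA x : A (phi x).
  by rewrite /phi; case: pselect => Ax; apply: gA => //; apply: hA.
have phi_inj : injective phi.
  move=> x x'; rewrite /phi; case: pselect => Ax; case: pselect => Ax' phiE.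
  - by case: (gI _ _ _ _ (nuA _) Ax (nuA _) Ax' phiE).
  - by case: (gI _ _ _ _ (nuA 0) Ax (nuA 1) (hA _ Ax') phiE) => /nu_inj.
  - by case: (gI _ _ _ _ (nuA 1) (hA _ Ax) (nuA 0) Ax' phiE) => /nu_inj.
  - case: (gI _ _ _ _ (nuA _) (hA _ Ax) (nuA _) (hA _ Ax') phiE).
    by move=> _; apply: hI; apply: mem_set.
exists (fun x y => g (phi x) (phi y)); split => // x y x' y' _ _ _ _.
by case/(gI _ _ _ _ (phiA x) (phiA y) (phiA x') (phiA y')) => /phi_inj -> /phi_inj ->.
Qed.

Lemma pairing_of_nat_inj : exists pr : L -> L -> L, pairing_on setT pr.
Proof.
have [S [PS Smax]] := Zorn_bigcup partial_pairing_bigcup.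
have [g gP Sg] := partial_pairing_graph PS.
have nuS i : carrier S (nu i).
  case: PS => _ _ _ _ [S0|//]; have [g0 g0P] := pairing_on_nat.
  case: (Smax _ _ (partial_pairing_set g0P (imageT nu))).
  rewrite S0; split; first exact: sub0set.
  by move/(_ (inl (nu 0)) (imageT nu 0)).
have [[h hA hI]|[h hA hI]] := set_inj_total (carrier S) (~` carrier S); last first.
  exact: pairing_of_cover gP nuS hA hI.
have [g' g'P g'g] := pairing_on_extend gP nuS hA hI.
case: (Smax _ _ (partial_pairing_set g'P (fun i => or_introl (nuS i)))).
split.
  move=> [x|[[x y] z]] /Sg //=; first by left.
  by case=> Sx Sy ->; split; [left|left|rewrite g'g].
move/(_ (inl (h (nu 0)))) => /= hS.
by apply: (hA (nu 0) (nuS 0)); apply: hS; right; exists (nu 0).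
Qed.

End Pairing.

Lemma seq_inj_of_pairing (T : Type) (e0 e1 : T) (pr : T -> T -> T) :
  e0 <> e1 -> pairing_on setT pr -> exists enc : seq T -> T, injective enc.
Proof.
move=> e01 [_ prI]; have {}prI x y x' y' := prI x y x' y' I I I I.
pose fix enc s := if s is x :: s' then pr e1 (pr x (enc s')) else pr e0 e0.
exists enc; elim=> [|x s IHs] [|x' s'] //= /prI[] //.
- by move=> e01E; case: e01.
- by move=> _ /prI[-> /IHs ->].
Qed.

Lemma fset_inj_of_infinite (L : choiceType) :
  infinite_type L -> exists code : {fset L} -> L, injective code.
Proof.
move=> /nat_inj_of_infinite[nu nu_inj].
have [pr prP] := pairing_of_nat_inj nu_inj.
have nu01 : nu 0 <> nu 1 by move/nu_inj.
have [enc enc_inj] := seq_inj_of_pairing nu01 prP.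
by exists (fun H => enc (val H)) => H H' /enc_inj/val_inj.
Qed.

End Cardinals.

Local Open Scope fset_scope.

Lemma top_column_size n k t : 2 <= n -> n * k < t -> t <= n * k.+1 -> t != 1 ->
    (n = 2 -> ~~ odd t) ->
  exists c, [/\ 2 <= c <= n, c <= t, t - c <= n * k, t - c != 1 &
                (n = 2 -> ~~ odd (t - c))].
Proof.
move=> n2 ltt tle t1 t_even.
have [d2|d1] := leqP 2 (t - n * k).
  exists (t - n * k); rewrite subKn ?(ltnW ltt) //; split; try lia.
  by rewrite muln_eq1; apply/nandP; left; lia.
have n3 : n != 2.
  apply/eqP => n2E; move: (t_even n2E); rewrite n2E in ltt d1 *.
  suff -> : t = (2 * k).+1 by rewrite /= oddM.
  lia.
have k_gt0 : 0 < k by case: k ltt d1 {tle t_even} => [|k]; rewrite ?muln0; lia.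
by exists n.-1; split; try nia; move=> /eqP; rewrite (negbTE n3).
Qed.

Lemma column_pattern n k t : 2 <= n -> t <= n * k -> t != 1 ->
    (n = 2 -> ~~ odd t) ->
  exists P : seq (nat * nat), [/\ uniq P, size P = t,
    {in P, forall p, p.1 < n /\ p.2 < k} &
    {in P, forall p, exists2 q, q \in P & q != p /\ q.2 = p.2}].
Proof.
move=> n2; elim: k t => [|k IHk] t.
  by rewrite muln0 leqn0 => /eqP -> _ _; exists [::].
move=> tle t1 t_even; have [tle'|ltt] := leqP t (n * k).
  have [P [Puniq Psize Pbound Ptwin]] := IHk t tle' t1 t_even.
  by exists P; split => // p /Pbound[? ?]; split => //; apply: ltnW.
have [c [/andP[c2 cn] ct tcle tc1 tc_even]] := top_column_size n2 ltt tle t1 t_even.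
have [P [Puniq Psize Pbound Ptwin]] := IHk (t - c) tcle tc1 tc_even.
pose C := [seq (j, k) | j <- iota 0 c].
exists (P ++ C); split.
- rewrite cat_uniq Puniq map_inj_uniq ?iota_uniq ?andbT; last by move=> ? ? [].
  by apply/hasPn => _ /mapP[j _ ->]; apply/negP => /Pbound[_]; rewrite ltnn.
- by rewrite size_cat size_map size_iota Psize subnK.
- move=> p; rewrite mem_cat => /orP[/Pbound[? ?]|/mapP[j]]; first by split => //; apply: ltnW.
  by rewrite mem_iota => /andP[_ ?] ->; split => //=; lia.
- move=> p; rewrite mem_cat => /orP[/Ptwin[q qP qp]|/mapP[j]].
    by exists q => //; rewrite mem_cat qP.
  rewrite mem_iota add0n => /andP[_ jc] ->; exists (if j == 0 then 1 else 0, k).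
    by rewrite mem_cat; apply/orP; right; apply/mapP; exists (if j == 0 then 1 else 0);
       rewrite // mem_iota; case: (j == 0); lia.
  by split => //; rewrite xpair_eqE eqxx andbT; case: (j =P 0) => [->|/eqP]; rewrite // eq_sym.
Qed.

Section OmitOne.
Variables (T : choiceType) (x0 : T).

Definition omit (H : {fset T}) j := H `\ nth x0 H j.

Lemma omit_sub H j : omit H j `<=` H.
Proof. exact: fsubsetDl. Qed.

Lemma card_omit H j : j < #|` H| -> #|` omit H j| = (#|` H|).-1.
Proof. by move=> jH; rewrite [in RHS](cardfsD1 (nth x0 H j)) mem_nth. Qed.

Lemma omit_inj H j j' : j < #|` H| -> j' < #|` H| -> omit H j = omit H j' -> j = j'.
Proof.
move=> jH j'H omitE; apply/eqP; apply: contraT => jj'.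
have : nth x0 H j' \in omit H j.
  by rewrite in_fsetD1 mem_nth // andbT nth_uniq // eq_sym.
by rewrite omitE in_fsetD1 eqxx.
Qed.

Lemma common_subset_eq_fsetI n (H H' s : {fset T}) : #|` H| = n -> #|` H'| = n ->
  H != H' -> s `<=` H `&` H' -> #|` s| = n.-1 -> s = H `&` H'.
Proof.
move=> Hn H'n HH' sHH' sn.
have : #|` H `&` H'| < n.
  rewrite -Hn fproper_ltn_card // fproperE fsubsetIl /=.
  apply: contra HH' => /fsubsetP HsubI; rewrite eqEfcard Hn H'n leqnn andbT.
  by apply/fsubsetP => x /HsubI; rewrite in_fsetI => /andP[].
by move=> ltn; apply/eqP; rewrite eqEfcard sHH' sn; lia.
Qed.
End OmitOne.

Section System.
Variables (L : choiceType) (x0 : L) (code : {fset L} -> L) (n k t : nat).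
Variable P : seq (nat * nat).
Hypotheses (code_inj : injective code) (P_uniq : uniq P) (P_size : size P = t).
Hypothesis P_bound : {in P, forall p, p.1 < n /\ p.2 < k}.
Hypothesis P_twin : {in P, forall p, exists2 q, q \in P & q != p /\ q.2 = p.2}.

(* inl (s, m) is the m-th copy of the set s; inr (i, j) are fresh points filling
   the members whose index i is not the code of an n-set. *)
Local Notation point := (({fset L} * nat) + (L * nat))%type.

Definition block (H : {fset L}) : {fset point} := [fset inl (omit x0 H p.1, p.2) | p in P].

Definition filler (i : L) : {fset point} := [fset inr (i, j) | j in iota 0 t].

Definition family (i : L) : {fset point} :=
  match pselect (exists H, #|` H| = n /\ code H = i) with
  | left ex => block (sval (cid ex))
  | right _ => filler i
  end.

Variant family_spec (i : L) : {fset point} -> Prop :=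
  | FamilyBlock H of #|` H| = n & code H = i : family_spec i (block H)
  | FamilyFiller of ~ (exists H, #|` H| = n /\ code H = i) : family_spec i (filler i).

Lemma familyP i : family_spec i (family i).
Proof.
rewrite /family; case: pselect => [ex|nex]; last exact: FamilyFiller.
by case: (cid ex) => H [Hn Hi]; apply: FamilyBlock.
Qed.

Lemma family_code H : #|` H| = n -> family (code H) = block H.
Proof. by move=> Hn; case: familyP => [H' _ /code_inj -> //|[]]; exists H. Qed.

Lemma card_block H : #|` H| = n -> #|` block H| = t.
Proof.
move=> Hn; rewrite card_in_imfset /= ?undup_id // => -[p1 p2] [q1 q2].
move=> /P_bound[/= p1n _] /P_bound[/= q1n _] [omitE ->].
by rewrite (omit_inj _ _ omitE) ?Hn.
Qed.

Lemma card_filler i : #|` filler i| = t.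
Proof. by rewrite card_imfset /= ?undup_id ?iota_uniq ?size_iota // => j j' []. Qed.

Lemma block_meet (H H' : {fset L}) : #|` H| = n -> #|` H'| = n -> H != H' ->
  #|` block H `&` block H'| <= k.
Proof.
move=> Hn H'n HH'.
have sub : block H `&` block H' `<=` [fset inl (H `&` H', m) | m in iota 0 k].
  apply/fsubsetP => z; rewrite in_fsetI => /andP[/imfsetP[p /= pP ->]].
  move=> /imfsetP[q /= qP [omitE qp2]]; apply/imfsetP; exists p.2.
    by rewrite mem_iota add0n; case: (P_bound pP).
  have [p1 _] := P_bound pP; have [q1 _] := P_bound qP.
  congr (inl (_, _)); apply: (common_subset_eq_fsetI Hn H'n HH').
    by rewrite fsubsetI omit_sub omitE omit_sub.
  by rewrite card_omit Hn.
apply: leq_trans (fsubset_leq_card sub) _; apply: leq_trans (leq_imfset_card _ _ _) _.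
by rewrite /= undup_id ?iota_uniq ?size_iota.
Qed.

Lemma family_meet i j : i != j -> #|` family i `&` family j| <= k.
Proof.
have disjoint0 (A B : {fset point}) : [disjoint A & B] -> #|` A `&` B| <= k.
  by rewrite -fsetI_eq0 => /eqP ->; rewrite cardfs0.
move=> ij; case: familyP => [H Hn Hi|_]; case: familyP => [H' H'n H'j|_].
- by apply: block_meet => //; apply: contraNneq ij => HH'; rewrite -Hi -H'j HH'.
- apply: disjoint0; apply/fdisjointP => _ /imfsetP[p _ ->].
  by apply/negP => /imfsetP[].
- apply: disjoint0; apply/fdisjointP => _ /imfsetP[m _ ->].
  by apply/negP => /imfsetP[].
- apply: disjoint0; apply/fdisjointP => _ /imfsetP[m _ ->].
  by apply/negP => /imfsetP[m' _ [ijE _]]; move: ij; rewrite ijE eqxx.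
Qed.

Lemma card_family i : #|` family i| = t.
Proof. by case: familyP => [H Hn _|_]; [apply: card_block|apply: card_filler]. Qed.

Lemma family_system : k < t -> is_system family t k.+1.
Proof.
move=> kt; split; last by split; [exact: card_family|move=> i j /eqP; exact: family_meet].
move=> i j familyE; apply/eqP; apply: contraT => /family_meet.
by rewrite familyE fsetIid card_family leqNgt kt.
Qed.

Lemma family_no_cf (M : Type) :
  partition_rel L ('I_k -> M) n n.-1 -> chiCF_gt family M.
Proof.
move=> part [f f_cf].
have [H [Hn [col Hcol]]] := part (fun s m => f (inl (s, val m))).
have fE s m (mk : m < k) : s `<=` H -> #|` s| = n.-1 -> f (inl (s, m)) = col (Ordinal mk).
  by move=> sH sn; rewrite -(Hcol s sH sn).
have inH p : p \in P -> omit x0 H p.1 `<=` H /\ #|` omit x0 H p.1| = n.-1.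
  by case/P_bound => p1 _; rewrite omit_sub card_omit Hn.
have [zeta [x [+ [fx x_uniq]]]] := f_cf (code H).
rewrite family_code // => /imfsetP[p pP xE].
have [q qP [qp qp2]] := P_twin pP.
have [[p1n p2k] [q1n _]] := (P_bound pP, P_bound qP).
have qE : inl (omit x0 H q.1, q.2) = x.
  apply: x_uniq; first by rewrite family_code //; apply/imfsetP; exists q.
  have [[pH pn] [qH qn]] := (inH p pP, inH q qP).
  by rewrite -fx xE qp2 (fE _ _ p2k qH qn) (fE _ _ p2k pH pn).
rewrite -Hn in p1n q1n; move: qE qp; rewrite xE => -[/(omit_inj q1n p1n) q1E q2E].
by rewrite [q]surjective_pairing q1E q2E -surjective_pairing eqxx.
Qed.
End System.

Theorem theorem3p1 (L : choiceType) (M : Type) (n k : nat) :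
  infinite_type L -> 2 <= n -> 1 <= k ->
  partition_rel L ('I_k -> M) n n.-1 ->
  forall t : nat,
    ((2 < n /\ k < t <= n * k) \/ (n = 2 /\ ~~ odd t /\ k < t <= 2 * k)) ->
    chiCF_sys_gt L t k.+1 M.
Proof.
move=> Linf n2 k1 part t t_range.
have [kt tnk t1 t_even] : [/\ k < t, t <= n * k, t != 1 & (n = 2 -> ~~ odd t)].
  by case: t_range => [[n3 /andP[? ?]]|[-> [? /andP[? ?]]]]; split => //; lia.
have [P [P_uniq P_size P_bound P_twin]] := column_pattern n2 tnk t1 t_even.
have [code code_inj] := fset_inj_of_infinite Linf.
exists _, (family (code fset0) code n t P); split; first by apply: family_system.
by move: part; apply: family_no_cf.
Qed.
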